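(* Let $(a_0,a_1,\ldots,a_n)$ be a finite sequence of positive integers and $\omega=[a_0,a_1,\ldots,a_n,1,1,1,\ldots]$. Then for every $\varepsilon>0$ there exist an integer $m>0$ and a positive integer $N$ such that the number $\beta$ whose continued fraction digits (indexed from $0$) are $a_0,\ldots,a_n$ in positions $0,\ldots,n$, the digit $N$ in position $n+m$, and $1$ in all other positions, satisfies $$\Phi(\omega)+\varepsilon<\Phi(\beta)<\Phi(\omega)+2\varepsilon.$$
   Context: For positive integers $d_0,d_1,\ldots$, $[d_0,d_1,d_2,\ldots]$ denotes the continued fraction $\cfrac{1}{d_0+\cfrac{1}{d_1+\cfrac{1}{d_2+\cdots}}}$, and for $\beta=[d_0,d_1,\ldots]$ we write $\alpha_j(\beta)=[d_j,d_{j+1},\ldots]$. The Yoccoz Brjuno function is $\Phi(\beta)=\sum_{k\ge 0}\alpha_0(\beta)\alpha_1(\beta)\cdots\alpha_{k-1}(\beta)\log\frac{1}{\alpha_k(\beta)}\in[0,\infty]$ (the $k=0$ term is $\log\frac{1}{\alpha_0(\beta)}$). *)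

From Stdlib Require Import Reals.
From Coquelicot Require Import Coquelicot.
Open Scope R_scope.

Fixpoint cf_fin (k : nat) (d : nat -> nat) : R :=
  match k with
  | O => / INR (d O)
  | S k' => / (INR (d O) + cf_fin k' (fun i => d (S i)))
  end.

(* Infinite continued fraction [d0, d1, d2, ...] as the limit of convergents
   (digits are positive integers in all uses). *)
Definition cf (d : nat -> nat) : R := real (Lim_seq (fun k => cf_fin k d)).

Definition alpha (j : nat) (d : nat -> nat) : R := cf (fun i => d (j + i)%nat).

Fixpoint alpha_prod (k : nat) (d : nat -> nat) : R :=
  match k with
  | O => 1
  | S k' => alpha_prod k' d * alpha k' d
  end.

(* Yoccoz Brjuno function, valued in [0, +oo] (nonnegative terms, so the
   limit of partial sums exists in Rbar). *)
Definition Phi (d : nat -> nat) : Rbar :=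
  Lim_seq (fun K => sum_f_R0 (fun k => alpha_prod k d * ln (/ alpha k d)) K).

Definition omega_digits (n : nat) (a : nat -> nat) : nat -> nat :=
  fun i => if Nat.leb i n then a i else 1%nat.

Definition beta_digits (n : nat) (a : nat -> nat) (m N : nat) : nat -> nat :=
  fun i => if Nat.leb i n then a i
           else if Nat.eqb i (n + m)%nat then N else 1%nat.

From Stdlib Require Import Reals Lra Lia Psatz FunctionalExtensionality.
From Coquelicot Require Import Coquelicot.
Open Scope R_scope.

(* Put the digit N at position K = n + m and let G(N) be the Brjuno value of the
   resulting number, so that G(1) = Phi(omega).  Iterating
   Phi(x) = ln(1/x) + x Phi(alpha_1(x)) over the first K digits expresses G(N) through
   the value y_N = 1/(N + g) and the Brjuno value F_N = ln(N + g) + y_N Phi([1,1,...])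
   of the tail [N,1,1,...], g being the golden mean.  The factor in front of F_N is a
   product of K complete quotients, bounded below independently of N, so G(N) -> oo.
   The same product controls the Lipschitz constant of G in (y_N, F_N); any two
   consecutive complete quotients multiply to at most 1/2, so for m large every step
   |G(N+1) - G(N)| is below eps, and the first N with G(N) > Phi(omega) + eps gives
   G(N) < Phi(omega) + 2 eps. *)

Definition shift (d : nat -> nat) : nat -> nat := fun i => d (S i).

Definition pos_digits (d : nat -> nat) : Prop := forall i, (0 < d i)%nat.

Lemma pos_digits_shift d : pos_digits d -> pos_digits (shift d).
Proof. intros Hd i; apply Hd. Qed.

Lemma INR_digit_ge1 c : (0 < c)%nat -> 1 <= INR c.
Proof. intros Hc; apply (le_INR 1); lia. Qed.

Lemma ln_le_sub1 x : 0 < x -> ln x <= x - 1.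
Proof. intros Hx; pose proof (exp_ineq1_le (ln x)); rewrite exp_ln in *; lra. Qed.

Lemma ln_inv_nonneg x : 0 < x <= 1 -> 0 <= ln (/ x).
Proof.
  intros Hx; rewrite <- ln_1; apply ln_le; [lra|].
  rewrite <- Rinv_1; apply Rinv_le_contravar; lra.
Qed.

Lemma Rabs_ln_sub_le a b m : 0 < m -> m <= a -> m <= b ->
  Rabs (ln a - ln b) <= Rabs (a - b) / m.
Proof.
  assert (Hhalf : forall x z, 0 < m -> m <= x -> m <= z -> z <= x ->
            ln x - ln z <= (x - z) / m).
  { intros x z Hm Hx Hz Hzx. rewrite <- ln_div by lra.
    eapply Rle_trans; [apply ln_le_sub1, Rdiv_lt_0_compat; lra|].
    replace (x / z - 1) with ((x - z) / z) by (field; lra).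
    unfold Rdiv; apply Rmult_le_compat_l; [lra|]. apply Rinv_le_contravar; lra. }
  intros Hm Ha Hb. destruct (Rle_dec b a).
  - assert (ln b <= ln a) by (apply ln_le; lra).
    rewrite !Rabs_right by lra. now apply Hhalf.
  - assert (ln a <= ln b) by (apply ln_le; lra).
    rewrite Rabs_left1, (Rabs_left1 (a - b)) by lra.
    replace (- (a - b)) with (b - a) by ring. pose proof (Hhalf b a); lra.
Qed.

Fixpoint prepend (K : nat) (f e : nat -> nat) : nat -> nat :=
  match K with
  | O => e
  | S K' => fun i => match i with O => f O | S i' => prepend K' (shift f) e i' end
  end.

Lemma prepend_nth K f e i : prepend K f e i = if Nat.ltb i K then f i else e (i - K)%nat.
Proof.
  revert f i; induction K as [|K IH]; intros f i.
  - now rewrite Nat.sub_0_r.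
  - destruct i as [|i]; [reflexivity|]. simpl prepend. now rewrite IH.
Qed.

Fixpoint cf_prefix (K : nat) (f : nat -> nat) (y : R) : R :=
  match K with
  | O => y
  | S K' => / (INR (f O) + cf_prefix K' (shift f) y)
  end.

Fixpoint cf_prefix_prod (K : nat) (f : nat -> nat) (y : R) : R :=
  match K with
  | O => 1
  | S K' => cf_prefix K f y * cf_prefix_prod K' (shift f) y
  end.

Fixpoint Phi_prefix (K : nat) (f : nat -> nat) (y F : R) : R :=
  match K with
  | O => F
  | S K' => ln (/ cf_prefix K f y) + cf_prefix K f y * Phi_prefix K' (shift f) y F
  end.

Fixpoint Phi_prefix_bound (K : nat) (f : nat -> nat) : R :=
  match K with
  | O => 2
  | S K' => INR (f O) - 1 + Phi_prefix_bound K' (shift f)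
  end.

Lemma cf_prefix_bounds K f y : pos_digits f -> 0 <= y <= 1 -> 0 <= cf_prefix K f y <= 1.
Proof.
  revert f; induction K as [|K IH]; intros f Hf Hy; simpl; [lra|].
  assert (Hc := INR_digit_ge1 _ (Hf O)).
  destruct (IH (shift f) (pos_digits_shift _ Hf) Hy).
  split; [left; apply Rinv_0_lt_compat; lra|].
  rewrite <- Rinv_1; apply Rinv_le_contravar; lra.
Qed.

Lemma cf_prefix_succ_pos K f y : pos_digits f -> 0 <= y <= 1 -> 0 < cf_prefix (S K) f y.
Proof.
  intros Hf Hy; simpl.
  assert (Hc := INR_digit_ge1 _ (Hf O)).
  destruct (cf_prefix_bounds K (shift f) y (pos_digits_shift _ Hf) Hy).
  apply Rinv_0_lt_compat; lra.
Qed.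

Lemma cf_prefix_prod_bounds K f y : pos_digits f -> 0 <= y <= 1 ->
  0 <= cf_prefix_prod K f y <= 1.
Proof.
  revert f; induction K as [|K IH]; intros f Hf Hy; cbn [cf_prefix_prod]; [lra|].
  destruct (cf_prefix_bounds (S K) f y Hf Hy).
  destruct (IH (shift f) (pos_digits_shift _ Hf) Hy).
  split; nra.
Qed.

Lemma cf_prefix_dist K f y y' : pos_digits f -> 0 <= y <= 1 -> 0 <= y' <= 1 ->
  Rabs (cf_prefix K f y - cf_prefix K f y') =
  cf_prefix_prod K f y * cf_prefix_prod K f y' * Rabs (y - y').
Proof.
  revert f; induction K as [|K IH]; intros f Hf Hy Hy'; [simpl; ring|].
  cbn [cf_prefix_prod cf_prefix].
  assert (Hc := INR_digit_ge1 _ (Hf O)).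
  assert (Hu := cf_prefix_bounds K (shift f) y (pos_digits_shift _ Hf) Hy).
  assert (Hu' := cf_prefix_bounds K (shift f) y' (pos_digits_shift _ Hf) Hy').
  transitivity (/ (INR (f O) + cf_prefix K (shift f) y) * / (INR (f O) + cf_prefix K (shift f) y')
    * Rabs (cf_prefix K (shift f) y - cf_prefix K (shift f) y')).
  2: { rewrite (IH (shift f) (pos_digits_shift _ Hf) Hy Hy'); ring. }
  set (u := cf_prefix K (shift f) y) in *; set (u' := cf_prefix K (shift f) y') in *.
  replace (/ (INR (f O) + u) - / (INR (f O) + u'))
    with (/ (INR (f O) + u) * / (INR (f O) + u') * (u' - u)) by (field; lra).
  rewrite Rabs_mult, (Rabs_minus_sym u'), (Rabs_right (_ * _)); [ring|].
  left; apply Rmult_lt_0_compat; apply Rinv_0_lt_compat; lra.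
Qed.

Lemma cf_prefix_prod_le_half_pow i K f y : pos_digits f -> 0 <= y <= 1 ->
  (2 * i <= K)%nat -> cf_prefix_prod K f y <= (/ 2) ^ i.
Proof.
  revert K f; induction i as [|i IH]; intros K f Hf Hy HK.
  { simpl; apply cf_prefix_prod_bounds; auto. }
  destruct K as [|[|K]]; [lia|lia|].
  (* two consecutive complete quotients satisfy  v / (c + v) <= 1 / 2 *)
  change (cf_prefix_prod (S (S K)) f y) with
    (/ (INR (f O) + cf_prefix (S K) (shift f) y) *
     (cf_prefix (S K) (shift f) y * cf_prefix_prod K (shift (shift f)) y)).
  assert (Hc := INR_digit_ge1 _ (Hf O)).
  assert (Hf2 := pos_digits_shift _ (pos_digits_shift _ Hf)).
  assert (Hv := cf_prefix_bounds (S K) (shift f) y (pos_digits_shift _ Hf) Hy).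
  assert (HP := cf_prefix_prod_bounds K _ y Hf2 Hy).
  assert (HI := IH K _ Hf2 Hy ltac:(lia)).
  set (v := cf_prefix (S K) (shift f) y) in *.
  assert (Hpair : / (INR (f O) + v) * v <= / 2).
  { apply (Rmult_le_reg_r (2 * (INR (f O) + v))); [lra|].
    replace (/ (INR (f O) + v) * v * (2 * (INR (f O) + v))) with (2 * v) by (field; lra).
    lra. }
  assert (0 <= / (INR (f O) + v)) by (left; apply Rinv_0_lt_compat; lra).
  simpl pow. nra.
Qed.

Lemma cf_prefix_prod_lower K f : pos_digits f ->
  exists p, 0 < p /\ forall y, 0 <= y <= 1 -> p <= cf_prefix_prod K f y.
Proof.
  revert f; induction K as [|K IH]; intros f Hf.
  { exists 1; split; [lra|]. intros; simpl; lra. }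
  destruct (IH (shift f) (pos_digits_shift _ Hf)) as [p [Hp Hlow]].
  assert (Hc := INR_digit_ge1 _ (Hf O)).
  exists (p * / (INR (f O) + 1)); split.
  { apply Rmult_lt_0_compat; [lra|]. apply Rinv_0_lt_compat; lra. }
  intros y Hy.
  change (cf_prefix_prod (S K) f y) with
    (/ (INR (f O) + cf_prefix K (shift f) y) * cf_prefix_prod K (shift f) y).
  assert (Hu := cf_prefix_bounds K (shift f) y (pos_digits_shift _ Hf) Hy).
  assert (/ (INR (f O) + 1) <= / (INR (f O) + cf_prefix K (shift f) y))
    by (apply Rinv_le_contravar; lra).
  assert (0 < / (INR (f O) + 1)) by (apply Rinv_0_lt_compat; lra).
  specialize (Hlow y Hy). nra.
Qed.

Lemma Phi_prefix_bound_ge2 K f : pos_digits f -> 2 <= Phi_prefix_bound K f.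
Proof.
  revert f; induction K as [|K IH]; intros f Hf; simpl; [lra|].
  assert (Hc := INR_digit_ge1 _ (Hf O)).
  specialize (IH _ (pos_digits_shift _ Hf)); lra.
Qed.

Lemma Phi_prefix_bound_ones_tail M K f : (forall i, (M <= i)%nat -> f i = 1%nat) ->
  (M <= K)%nat -> Phi_prefix_bound K f = Phi_prefix_bound M f.
Proof.
  revert f K; induction M as [|M IH]; intros f K Hf HK.
  - clear HK; revert f Hf; induction K as [|K IHK]; intros f Hf; [reflexivity|].
    simpl. rewrite (Hf O) by lia. rewrite IHK by (intros; apply Hf; lia). simpl; ring.
  - destruct K as [|K]; [lia|]. simpl.
    rewrite (IH (shift f) K); [reflexivity| |lia]. intros i Hi; apply Hf; lia.
Qed.

Lemma Phi_prefix_lower K f y F : pos_digits f -> 0 <= y <= 1 -> 0 <= F ->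
  cf_prefix_prod K f y * F <= Phi_prefix K f y F.
Proof.
  revert f; induction K as [|K IH]; intros f Hf Hy HF; [simpl; lra|].
  cbn [Phi_prefix cf_prefix_prod].
  assert (Hv := cf_prefix_succ_pos K f y Hf Hy).
  assert (Hv1 := cf_prefix_bounds (S K) f y Hf Hy).
  assert (Hl := ln_inv_nonneg (cf_prefix (S K) f y) ltac:(lra)).
  specialize (IH (shift f) (pos_digits_shift _ Hf) Hy HF).
  nra.
Qed.

Lemma Phi_prefix_nonneg K f y F : pos_digits f -> 0 <= y <= 1 -> 0 <= F ->
  0 <= Phi_prefix K f y F.
Proof.
  intros Hf Hy HF. eapply Rle_trans; [|apply Phi_prefix_lower; auto].
  destruct (cf_prefix_prod_bounds K f y Hf Hy); nra.
Qed.

Lemma Phi_prefix_upper K f y F : pos_digits f -> 0 <= y <= 1 -> 0 <= F ->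
  Phi_prefix K f y F <= Phi_prefix_bound K f + cf_prefix_prod K f y * F.
Proof.
  revert f; induction K as [|K IH]; intros f Hf Hy HF; [simpl; lra|].
  cbn [Phi_prefix cf_prefix_prod Phi_prefix_bound].
  change (cf_prefix (S K) f y) with (/ (INR (f O) + cf_prefix K (shift f) y)).
  rewrite Rinv_inv.
  assert (Hc := INR_digit_ge1 _ (Hf O)).
  assert (Hu := cf_prefix_bounds K (shift f) y (pos_digits_shift _ Hf) Hy).
  assert (HB := Phi_prefix_bound_ge2 K _ (pos_digits_shift _ Hf)).
  specialize (IH _ (pos_digits_shift _ Hf) Hy HF).
  set (c := INR (f O)) in *; set (u := cf_prefix K (shift f) y) in *.
  set (B := Phi_prefix_bound K (shift f)) in *.
  assert (Hl := ln_le_sub1 (c + u) ltac:(lra)).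
  assert (Hv : 0 < / (c + u)) by (apply Rinv_0_lt_compat; lra).
  assert (Hvv : / (c + u) * (c + u) = 1) by (field; lra).
  (* with ln (c + u) <= c + u - 1, it suffices that u <= B (1 - 1 / (c + u)), true as B >= 2 *)
  assert (Hkey : u <= B * (1 - / (c + u))).
  { apply (Rmult_le_reg_r (c + u)); [lra|].
    replace (B * (1 - / (c + u)) * (c + u)) with (B * (c + u - 1)) by (field; lra).
    nra. }
  nra.
Qed.

Lemma ln_affine_step_lipschitz c u u' S S' : 1 <= c -> 0 <= u <= 1 -> 0 <= u' <= 1 -> 0 <= S' ->
  Rabs (ln (c + u) + / (c + u) * S - (ln (c + u') + / (c + u') * S')) <=
  / (c + u) * (Rabs (S - S') + Rabs (u - u') * (2 + S')).
Proof.
  intros Hc Hu Hu' HS'.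
  assert (Hv : 0 < / (c + u)) by (apply Rinv_0_lt_compat; lra).
  assert (Hv' : 0 < / (c + u')) by (apply Rinv_0_lt_compat; lra).
  assert (Hv'1 : / (c + u') <= 1) by (rewrite <- Rinv_1; apply Rinv_le_contravar; lra).
  assert (Hdu := Rabs_pos (u - u')).
  assert (Hln : Rabs (ln (c + u) - ln (c + u')) <= / (c + u) * (2 * Rabs (u - u'))).
  { eapply Rle_trans; [apply (Rabs_ln_sub_le _ _ c); lra|].
    replace (c + u - (c + u')) with (u - u') by ring.
    assert (/ c <= 2 * / (c + u)).
    { replace (2 * / (c + u)) with (/ ((c + u) / 2)) by (field; lra).
      apply Rinv_le_contravar; lra. }
    unfold Rdiv; nra. }
  assert (Hinv : Rabs (/ (c + u) - / (c + u')) <= / (c + u) * Rabs (u - u')).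
  { replace (/ (c + u) - / (c + u')) with (/ (c + u) * (/ (c + u') * (u' - u))) by (field; lra).
    rewrite Rabs_mult, Rabs_mult, (Rabs_right (/ (c + u))), (Rabs_right (/ (c + u'))), Rabs_minus_sym
      by lra.
    apply Rmult_le_compat_l; [lra|].
    rewrite <- (Rmult_1_l (Rabs (u - u'))) at 2. apply Rmult_le_compat_r; lra. }
  replace (ln (c + u) + / (c + u) * S - (ln (c + u') + / (c + u') * S'))
    with ((ln (c + u) - ln (c + u')) + / (c + u) * (S - S') + (/ (c + u) - / (c + u')) * S')
    by ring.
  eapply Rle_trans; [apply Rabs_triang|].
  eapply Rle_trans; [apply Rplus_le_compat_r, Rabs_triang|].
  rewrite !Rabs_mult, (Rabs_right (/ (c + u))), (Rabs_right S') by lra.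
  nra.
Qed.

Lemma Phi_prefix_lipschitz K f y y' F F' :
  pos_digits f -> 0 <= y <= 1 -> 0 <= y' <= 1 -> 0 <= F -> 0 <= F' ->
  Rabs (Phi_prefix K f y F - Phi_prefix K f y' F') <=
  cf_prefix_prod K f y *
    (Rabs (F - F') + INR K * Rabs (y - y') * (2 + Phi_prefix_bound K f + F')).
Proof.
  revert f; induction K as [|K IH]; intros f Hf Hy Hy' HF HF'.
  { simpl; pose proof (Rabs_pos (y - y')); lra. }
  assert (Hf1 := pos_digits_shift _ Hf).
  assert (Hc := INR_digit_ge1 _ (Hf O)).
  assert (Hu := cf_prefix_bounds K (shift f) y Hf1 Hy).
  assert (Hu' := cf_prefix_bounds K (shift f) y' Hf1 Hy').
  assert (HP := cf_prefix_prod_bounds K (shift f) y Hf1 Hy).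
  assert (HP' := cf_prefix_prod_bounds K (shift f) y' Hf1 Hy').
  assert (HS' := Phi_prefix_nonneg K (shift f) y' F' Hf1 Hy' HF').
  assert (HSup' := Phi_prefix_upper K (shift f) y' F' Hf1 Hy' HF').
  assert (Hdu := cf_prefix_dist K (shift f) y y' Hf1 Hy Hy').
  assert (IH1 := IH (shift f) Hf1 Hy Hy' HF HF').
  cbn [Phi_prefix cf_prefix_prod Phi_prefix_bound].
  change (cf_prefix (S K) f ?z) with (/ (INR (f O) + cf_prefix K (shift f) z)).
  rewrite !Rinv_inv, S_INR.
  set (c := INR (f O)) in *.
  set (u := cf_prefix K (shift f) y) in *; set (u' := cf_prefix K (shift f) y') in *.
  set (P := cf_prefix_prod K (shift f) y) in *; set (P' := cf_prefix_prod K (shift f) y') in *.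
  set (S := Phi_prefix K (shift f) y F) in *; set (S' := Phi_prefix K (shift f) y' F') in *.
  set (B := Phi_prefix_bound K (shift f)) in *.
  set (dy := Rabs (y - y')) in *; set (dF := Rabs (F - F')) in *.
  assert (Hdy : 0 <= dy) by apply Rabs_pos.
  assert (HK := pos_INR K).
  assert (Hv : 0 < / (c + u)) by (apply Rinv_0_lt_compat; lra).
  eapply Rle_trans; [apply ln_affine_step_lipschitz; lra|].
  rewrite Rmult_assoc; apply Rmult_le_compat_l; [lra|].
  assert (Htail : Rabs (u - u') * (2 + S') <= P * dy * (2 + B + F')).
  { rewrite Hdu. assert (P' * (2 + S') <= 2 + B + F') by nra.
    assert (0 <= P * dy) by nra. nra. }
  eapply Rle_trans; [apply Rplus_le_compat; [exact IH1 | exact Htail]|].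
  assert (0 <= P * (INR K + 1) * dy * (c - 1))
    by (repeat apply Rmult_le_pos; lra).
  assert (P * (dF + (INR K + 1) * dy * (2 + (c - 1 + B) + F'))
          - (P * (dF + INR K * dy * (2 + B + F')) + P * dy * (2 + B + F'))
          = P * (INR K + 1) * dy * (c - 1)) by ring.
  lra.
Qed.

Definition Phi_partial (d : nat -> nat) (K : nat) : R :=
  sum_f_R0 (fun k => alpha_prod k d * ln (/ alpha k d)) K.

Lemma Phi_of_is_lim d (F : R) : is_lim_seq (Phi_partial d) F -> Phi d = Finite F.
Proof. apply is_lim_seq_unique. Qed.

Lemma cf_of_is_lim d (y : R) : is_lim_seq (fun k => cf_fin k d) y -> cf d = y.
Proof. intros H; unfold cf; now rewrite (is_lim_seq_unique _ _ H). Qed.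

Lemma alpha_prod_succ k d : alpha_prod (S k) d = alpha O d * alpha_prod k (shift d).
Proof.
  induction k as [|k IH]; [simpl; ring|].
  change (alpha_prod (S (S k)) d) with (alpha_prod (S k) d * alpha (S k) d).
  rewrite IH. change (alpha (S k) d) with (alpha k (shift d)). cbn [alpha_prod]; ring.
Qed.

Lemma Phi_partial_succ d K :
  Phi_partial d (S K) = ln (/ alpha O d) + alpha O d * Phi_partial (shift d) K.
Proof.
  unfold Phi_partial. rewrite decomp_sum by lia. simpl pred.
  rewrite scal_sum. simpl alpha_prod at 1. rewrite Rmult_1_l.
  f_equal. apply sum_eq. intros i _. rewrite alpha_prod_succ. change (alpha (S i) d) with (alpha i (shift d)). ring.
Qed.

Lemma is_lim_cf_cons d (y : R) : (0 < d O)%nat -> 0 <= y ->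
  is_lim_seq (fun k => cf_fin k (shift d)) y ->
  is_lim_seq (fun k => cf_fin k d) (/ (INR (d O) + y)).
Proof.
  intros Hd Hy H. apply is_lim_seq_incr_1.
  assert (Hc := INR_digit_ge1 _ Hd).
  apply (is_lim_seq_inv _ (INR (d O) + y)); [|intro E; injection E; lra].
  apply is_lim_seq_plus'; [apply is_lim_seq_const | exact H].
Qed.

Lemma is_lim_Phi_partial_cons d (F : R) :
  is_lim_seq (Phi_partial (shift d)) F ->
  is_lim_seq (Phi_partial d) (ln (/ cf d) + cf d * F).
Proof.
  intros H. apply is_lim_seq_incr_1.
  apply (is_lim_seq_ext (fun K => ln (/ cf d) + cf d * Phi_partial (shift d) K)).
  { intros K. now rewrite Phi_partial_succ. }
  apply is_lim_seq_plus'; [apply is_lim_seq_const | now apply (is_lim_seq_scal_l _ _ F)].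
Qed.

Lemma is_lim_prepend K f e (y F : R) : pos_digits f -> 0 <= y <= 1 ->
  is_lim_seq (fun k => cf_fin k e) y -> is_lim_seq (Phi_partial e) F ->
  is_lim_seq (fun k => cf_fin k (prepend K f e)) (cf_prefix K f y) /\
  is_lim_seq (Phi_partial (prepend K f e)) (Phi_prefix K f y F).
Proof.
  revert f; induction K as [|K IH]; intros f Hf Hy Hcf HPhi; [now split|].
  destruct (IH (shift f) (pos_digits_shift _ Hf) Hy Hcf HPhi) as [Hcf' HPhi'].
  assert (Hu := cf_prefix_bounds K (shift f) y (pos_digits_shift _ Hf) Hy).
  assert (Hcf1 : is_lim_seq (fun k => cf_fin k (prepend (S K) f e)) (cf_prefix (S K) f y))
    by (apply (is_lim_cf_cons (prepend (S K) f e) (cf_prefix K (shift f) y)); [exact (Hf O) | apply Hu | exact Hcf']).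
  split; [exact Hcf1|].
  cbn [Phi_prefix]. rewrite <- (cf_of_is_lim _ _ Hcf1). now apply is_lim_Phi_partial_cons.
Qed.

Lemma cf_fin_eq_cf_prefix k d : cf_fin k d = cf_prefix (S k) d 0.
Proof.
  revert d; induction k as [|k IH]; intros d; [simpl; now rewrite Rplus_0_r|].
  change (cf_fin (S k) d) with (/ (INR (d O) + cf_fin k (shift d))).
  now rewrite IH.
Qed.

Definition ones : nat -> nat := fun _ => 1%nat.

Definition golden : R := (sqrt 5 - 1) / 2.

Lemma golden_bounds : 0 < golden < 1.
Proof.
  unfold golden. pose proof (sqrt_sqrt 5 ltac:(lra)). pose proof (sqrt_pos 5).
  split; nra.
Qed.

Lemma golden_inv : / (1 + golden) = golden.
Proof.
  pose proof golden_bounds.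
  assert (golden * (1 + golden) = 1).
  { unfold golden. pose proof (sqrt_sqrt 5 ltac:(lra)). nra. }
  apply (Rmult_eq_reg_r (1 + golden)); [|lra]. rewrite Rinv_l; lra.
Qed.

Lemma cf_prefix_ones_golden K : cf_prefix K ones golden = golden.
Proof.
  induction K as [|K IH]; [reflexivity|].
  change (/ (1 + cf_prefix K ones golden) = golden). now rewrite IH, golden_inv.
Qed.

Lemma cf_prefix_prod_ones_golden K : cf_prefix_prod K ones golden = golden ^ K.
Proof.
  induction K as [|K IH]; [reflexivity|].
  change (cf_prefix (S K) ones golden * cf_prefix_prod K ones golden = golden ^ S K).
  now rewrite IH, cf_prefix_ones_golden.
Qed.

Lemma is_lim_cf_ones : is_lim_seq (fun k => cf_fin k ones) golden.
Proof.
  pose proof golden_bounds as Hg.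
  assert (Hones : pos_digits ones) by (intros i; unfold ones; lia).
  (* [golden] is a fixed point of [cf_prefix (S k) ones], and the convergents are its values at 0 *)
  assert (Hclose : forall k, Rabs (cf_fin k ones - golden) <= golden ^ k).
  { intros k. rewrite cf_fin_eq_cf_prefix, <- (cf_prefix_ones_golden (S k)) at 1.
    rewrite cf_prefix_dist, cf_prefix_prod_ones_golden by (auto; lra).
    destruct (cf_prefix_prod_bounds (S k) ones 0 Hones ltac:(lra)).
    rewrite Rminus_0_l, Rabs_Ropp, Rabs_right by lra.
    assert (0 < golden ^ k) by (apply pow_lt; lra).
    simpl pow. set (P := cf_prefix_prod (S k) ones 0) in *.
    replace (P * (golden * golden ^ k) * golden) with (P * (golden * golden) * golden ^ k)
      by ring.
    rewrite <- (Rmult_1_l (golden ^ k)) at 2. apply Rmult_le_compat_r; [lra|].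
    rewrite <- (Rmult_1_l 1). apply Rmult_le_compat; nra. }
  assert (Hgeom : is_lim_seq (fun k => golden ^ k) 0)
    by (apply is_lim_seq_geom; rewrite Rabs_right; lra).
  apply (is_lim_seq_le_le (fun k => golden - golden ^ k) _ (fun k => golden + golden ^ k)).
  - intros k. specialize (Hclose k). apply Rabs_le_between' in Hclose. lra.
  - replace (Finite golden) with (Finite (golden - 0)) by (f_equal; ring).
    apply is_lim_seq_minus'; [apply is_lim_seq_const | exact Hgeom].
  - replace (Finite golden) with (Finite (golden + 0)) by (f_equal; ring).
    apply is_lim_seq_plus'; [apply is_lim_seq_const | exact Hgeom].
Qed.

Definition Phi_ones : R := ln (/ golden) / (1 - golden).

Lemma is_lim_Phi_partial_ones : is_lim_seq (Phi_partial ones) Phi_ones.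
Proof.
  pose proof golden_bounds as Hg.
  assert (Halpha : forall k, alpha k ones = golden)
    by (intros k; exact (cf_of_is_lim _ _ is_lim_cf_ones)).
  assert (Hprod : forall k, alpha_prod k ones = golden ^ k)
    by (induction k as [|k IH]; [reflexivity|]; simpl; rewrite IH, Halpha; ring).
  apply (is_lim_seq_ext (fun K => ln (/ golden) * sum_n (fun k => golden ^ k) K)).
  { intros K. unfold Phi_partial. rewrite sum_n_Reals, scal_sum.
    apply sum_eq; intros k _. now rewrite Hprod, Halpha. }
  apply (is_lim_seq_scal_l _ _ (/ (1 - golden))).
  apply is_series_geom. rewrite Rabs_right; lra.
Qed.

Definition digit_tail (N : nat) : nat -> nat :=
  fun i => match i with O => N | S _ => 1%nat end.

Definition tail_cf (N : nat) : R := / (INR N + golden).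

Definition tail_Phi (N : nat) : R := ln (INR N + golden) + tail_cf N * Phi_ones.

Lemma tail_cf_bounds N : (0 < N)%nat -> 0 < tail_cf N <= 1.
Proof.
  intros HN. assert (H1 := INR_digit_ge1 N HN). pose proof golden_bounds.
  unfold tail_cf; split; [apply Rinv_0_lt_compat; lra|].
  rewrite <- Rinv_1; apply Rinv_le_contravar; lra.
Qed.

Lemma Phi_ones_pos : 0 < Phi_ones.
Proof.
  pose proof golden_bounds. unfold Phi_ones. apply Rdiv_lt_0_compat; [|lra].
  rewrite <- ln_1. apply ln_increasing; [lra|].
  rewrite <- Rinv_1; apply Rinv_lt_contravar; lra.
Qed.

Lemma tail_Phi_lower N : (0 < N)%nat -> 0 <= ln (INR N + golden) <= tail_Phi N.
Proof.
  intros HN. assert (H1 := INR_digit_ge1 N HN). pose proof golden_bounds.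
  pose proof (tail_cf_bounds N HN). pose proof Phi_ones_pos.
  split; [rewrite <- ln_1; apply ln_le; lra|]. unfold tail_Phi; nra.
Qed.

Lemma Phi_prepend_digit_tail K f N : pos_digits f -> (0 < N)%nat ->
  Phi (prepend K f (digit_tail N)) = Finite (Phi_prefix K f (tail_cf N) (tail_Phi N)).
Proof.
  intros Hf HN. pose proof golden_bounds.
  assert (Hcf : is_lim_seq (fun k => cf_fin k (digit_tail N)) (tail_cf N))
    by (apply (is_lim_cf_cons (digit_tail N) golden); [exact HN | lra | exact is_lim_cf_ones]).
  assert (HPhi : is_lim_seq (Phi_partial (digit_tail N)) (tail_Phi N)).
  { unfold tail_Phi. rewrite <- (Rinv_inv (INR N + golden)).
    fold (tail_cf N). rewrite <- (cf_of_is_lim _ _ Hcf).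
    exact (is_lim_Phi_partial_cons (digit_tail N) _ is_lim_Phi_partial_ones). }
  apply Phi_of_is_lim.
  apply (is_lim_prepend K f _ (tail_cf N)); auto.
  pose proof (tail_cf_bounds N HN); lra.
Qed.

Lemma beta_digits_prepend n a m N : (0 < m)%nat ->
  beta_digits n a m N = prepend (n + m) (omega_digits n a) (digit_tail N).
Proof.
  intros Hm. apply functional_extensionality; intros i.
  rewrite prepend_nth. unfold beta_digits, omega_digits, digit_tail.
  destruct (Nat.leb_spec i n), (Nat.ltb_spec i (n + m)), (Nat.eqb_spec i (n + m));
    try lia; auto.
  - subst. now rewrite Nat.sub_diag.
  - destruct (i - (n + m))%nat eqn:E; [lia|reflexivity].
Qed.

Lemma omega_digits_eq_beta_digits n a m : (0 < m)%nat ->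
  omega_digits n a = beta_digits n a m 1.
Proof.
  intros Hm. apply functional_extensionality; intros i.
  unfold beta_digits, omega_digits.
  destruct (Nat.leb i n), (Nat.eqb i (n + m)); reflexivity.
Qed.

Lemma tail_steps N : (0 < N)%nat ->
  Rabs (tail_Phi N - tail_Phi (S N)) <= 1 + Phi_ones /\
  Rabs (tail_cf N - tail_cf (S N)) <= 1 /\
  Rabs (tail_cf N - tail_cf (S N)) * (2 + tail_Phi (S N)) <= 3 + Phi_ones.
Proof.
  intros HN. pose proof golden_bounds. pose proof Phi_ones_pos.
  assert (Ht : 1 <= INR N + golden) by (pose proof (INR_digit_ge1 N HN); lra).
  unfold tail_Phi, tail_cf. rewrite S_INR.
  replace (INR N + 1 + golden) with (INR N + golden + 1) by ring.
  set (t := INR N + golden) in *.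
  assert (Hdy : Rabs (/ t - / (t + 1)) = / t * / (t + 1)).
  { replace (/ t - / (t + 1)) with (/ t * / (t + 1)) by (field; lra).
    apply Rabs_right. left; apply Rmult_lt_0_compat; apply Rinv_0_lt_compat; lra. }
  assert (Ht1 : 0 < / (t + 1) <= 1)
    by (split; [apply Rinv_0_lt_compat; lra | rewrite <- Rinv_1; apply Rinv_le_contravar; lra]).
  assert (Hdy1 : 0 <= / t * / (t + 1) <= / (t + 1)).
  { assert (0 < / t <= 1)
      by (split; [apply Rinv_0_lt_compat; lra | rewrite <- Rinv_1; apply Rinv_le_contravar; lra]).
    split; nra. }
  assert (Hln : Rabs (ln t - ln (t + 1)) <= 1).
  { eapply Rle_trans; [apply (Rabs_ln_sub_le _ _ 1); lra|].
    rewrite Rabs_left by lra. lra. }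
  assert (Hln1 : 0 <= ln (t + 1) <= t)
    by (split; [rewrite <- ln_1; apply ln_le; lra | pose proof (ln_le_sub1 (t + 1)); lra]).
  rewrite Hdy. split; [|split]; [| lra |].
  - replace (ln t + / t * Phi_ones - (ln (t + 1) + / (t + 1) * Phi_ones))
      with ((ln t - ln (t + 1)) + (/ t - / (t + 1)) * Phi_ones) by ring.
    eapply Rle_trans; [apply Rabs_triang|].
    rewrite Rabs_mult, Hdy, (Rabs_right Phi_ones) by lra. nra.
  - (* the logarithmic growth of the tail is absorbed by the factor 1 / (t (t + 1)) *)
    assert (/ t * / (t + 1) * ln (t + 1) <= 1).
    { assert (E : / t * / (t + 1) * (t * (t + 1)) = 1) by (field; lra).
      apply Rle_trans with (/ t * / (t + 1) * (t * (t + 1))); [|lra].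
      apply Rmult_le_compat_l; nra. }
    assert (/ t * / (t + 1) * (/ (t + 1) * Phi_ones) <= Phi_ones).
    { rewrite <- Rmult_assoc. rewrite <- (Rmult_1_l Phi_ones) at 2.
      apply Rmult_le_compat_r; nra. }
    rewrite !Rmult_plus_distr_l. lra.
Qed.

Lemma Phi_prefix_tail_step K f N : pos_digits f -> (0 < N)%nat ->
  Rabs (Phi_prefix K f (tail_cf (S N)) (tail_Phi (S N)) - Phi_prefix K f (tail_cf N) (tail_Phi N))
  <= cf_prefix_prod K f (tail_cf N) * (INR K + 1) * (3 + Phi_prefix_bound K f + Phi_ones).
Proof.
  intros Hf HN.
  pose proof (tail_cf_bounds N HN). pose proof (tail_cf_bounds (S N) ltac:(lia)).
  pose proof (tail_Phi_lower N HN). pose proof (tail_Phi_lower (S N) ltac:(lia)).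
  destruct (tail_steps N HN) as [HdF [Hdy HdyF]].
  pose proof (cf_prefix_prod_bounds K f (tail_cf N) Hf ltac:(lra)).
  pose proof (Phi_prefix_bound_ge2 K f Hf). pose proof (pos_INR K). pose proof Phi_ones_pos.
  rewrite Rabs_minus_sym.
  eapply Rle_trans; [apply Phi_prefix_lipschitz; auto; lra|].
  rewrite (Rmult_assoc _ (INR K + 1)). apply Rmult_le_compat_l; [lra|].
  set (B := Phi_prefix_bound K f) in *.
  set (dy := Rabs (tail_cf N - tail_cf (S N))) in *.
  assert (dy * (2 + B + tail_Phi (S N)) <= 3 + B + Phi_ones)
    by (pose proof (Rabs_pos (tail_cf N - tail_cf (S N))); nra).
  assert (INR K * dy * (2 + B + tail_Phi (S N)) <= INR K * (3 + B + Phi_ones))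
    by (rewrite Rmult_assoc; apply Rmult_le_compat_l; lra).
  nra.
Qed.

Lemma succ_sqr_le_pow4 i : (INR i + 1) ^ 2 <= 4 ^ i.
Proof.
  induction i as [|i IH]; [simpl; lra|].
  rewrite S_INR. pose proof (pos_INR i). simpl in IH |- *. nra.
Qed.

Lemma quarter_pow_linear_small (c eps : R) : 0 <= c -> 0 < eps ->
  exists i : nat, (/ 4) ^ i * (INR i + 1) * c < eps.
Proof.
  intros Hc Heps. destruct (INR_unbounded (c / eps)) as [i Hi]. exists i.
  pose proof (pos_INR i).
  assert (H4 : 0 < 4 ^ i) by (apply pow_lt; lra).
  assert (Hq : (/ 4) ^ i * (INR i + 1) <= / (INR i + 1)).
  { rewrite pow_inv. apply (Rmult_le_reg_l (4 ^ i * (INR i + 1))); [nra|].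
    pose proof (succ_sqr_le_pow4 i) as Hsq. simpl in Hsq.
    replace (4 ^ i * (INR i + 1) * (/ 4 ^ i * (INR i + 1))) with ((INR i + 1) * (INR i + 1))
      by (field; lra).
    replace (4 ^ i * (INR i + 1) * / (INR i + 1)) with (4 ^ i) by (field; lra). lra. }
  apply Rle_lt_trans with (/ (INR i + 1) * c); [apply Rmult_le_compat_r; lra|].
  apply (Rmult_lt_reg_l (INR i + 1)); [lra|].
  replace ((INR i + 1) * (/ (INR i + 1) * c)) with c by (field; lra).
  unfold Rdiv in Hi. apply (Rmult_lt_compat_r eps) in Hi; [|lra].
  rewrite Rmult_assoc, Rinv_l in Hi by lra. nra.
Qed.

Lemma exists_tail_position_small_steps (f : nat -> nat) (M : nat) (eps : R) :
  pos_digits f -> (forall i, (M < i)%nat -> f i = 1%nat) -> 0 < eps ->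
  exists m, (0 < m)%nat /\ forall N, (0 < N)%nat ->
    Rabs (Phi_prefix (M + m) f (tail_cf (S N)) (tail_Phi (S N))
          - Phi_prefix (M + m) f (tail_cf N) (tail_Phi N)) < eps.
Proof.
  intros Hf Hf1 Heps.
  set (B := Phi_prefix_bound (S M) f).
  assert (HB : 2 <= B) by (apply Phi_prefix_bound_ge2, Hf).
  pose proof Phi_ones_pos. pose proof (pos_INR M).
  destruct (quarter_pow_linear_small ((INR M + 4) * (3 + B + Phi_ones)) eps)
    as [i Hi]; [nra | exact Heps |].
  exists (S (4 * i)); split; [lia|]. intros N HN.
  set (K := (M + S (4 * i))%nat).
  eapply Rle_lt_trans; [apply Phi_prefix_tail_step; auto|].
  rewrite (Phi_prefix_bound_ones_tail (S M)) by (auto; unfold K; lia). fold B.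
  pose proof (tail_cf_bounds N HN).
  assert (HP : cf_prefix_prod K f (tail_cf N) <= (/ 4) ^ i).
  { replace (/ 4) with ((/ 2) ^ 2) by field. rewrite <- pow_mult.
    apply cf_prefix_prod_le_half_pow; auto; [lra | unfold K; lia]. }
  pose proof (cf_prefix_prod_bounds K f (tail_cf N) Hf ltac:(lra)).
  assert (HK : INR K + 1 <= (INR M + 4) * (INR i + 1)).
  { unfold K. rewrite plus_INR, S_INR, mult_INR. simpl INR. pose proof (pos_INR i). nra. }
  assert (H4 : 0 < (/ 4) ^ i) by (apply pow_lt; lra).
  eapply Rle_lt_trans; [|exact Hi].
  replace ((/ 4) ^ i * (INR i + 1) * ((INR M + 4) * (3 + B + Phi_ones)))
    with ((/ 4) ^ i * ((INR M + 4) * (INR i + 1)) * (3 + B + Phi_ones)) by ring.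
  apply Rmult_le_compat_r; [lra|].
  pose proof (pos_INR K). apply Rmult_le_compat; lra.
Qed.

Lemma Phi_prefix_tail_unbounded K f (A : R) : pos_digits f ->
  exists N, (0 < N)%nat /\ A < Phi_prefix K f (tail_cf N) (tail_Phi N).
Proof.
  intros Hf. destruct (cf_prefix_prod_lower K f Hf) as [p [Hp Hlow]].
  destruct (INR_unbounded (exp (A / p))) as [N HN].
  assert (HN0 : (0 < N)%nat).
  { destruct N; [simpl in HN; pose proof (exp_pos (A / p)); lra | lia]. }
  exists N; split; [exact HN0|].
  pose proof golden_bounds. pose proof (tail_cf_bounds N HN0).
  pose proof (tail_Phi_lower N HN0).
  assert (Hln : A / p < ln (INR N + golden)).
  { rewrite <- (ln_exp (A / p)). apply ln_increasing; [apply exp_pos | lra]. }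
  assert (A < p * tail_Phi N).
  { apply (Rmult_lt_reg_r (/ p)); [apply Rinv_0_lt_compat; lra|].
    replace (p * tail_Phi N * / p) with (tail_Phi N) by (field; lra).
    unfold Rdiv in Hln; lra. }
  eapply Rlt_le_trans; [|apply Phi_prefix_lower; auto; lra].
  specialize (Hlow (tail_cf N) ltac:(lra)). nra.
Qed.

Lemma discrete_ivt (D : nat -> R) (a d : R) : D O <= a -> (exists N0, a < D N0) ->
  (forall N, Rabs (D (S N) - D N) < d) -> exists N, a < D N < a + d.
Proof.
  intros H0 [N0 HN0] Hstep.
  assert (Hcross : forall k, (exists N, a < D N < a + d) \/ D k <= a).
  { induction k as [|k [IH|IH]]; [now right | now left |].
    destruct (Rle_dec (D (S k)) a) as [Hle|Hgt]; [now right|].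
    left; exists (S k). specialize (Hstep k). apply Rabs_def2 in Hstep. lra. }
  destruct (Hcross N0) as [H|H]; [exact H | lra].
Qed.

Theorem mainTheorem3 (n : nat) (a : nat -> nat)
  (ha : forall i : nat, (i <= n)%nat -> (0 < a i)%nat)
  (eps : R) (heps : 0 < eps) :
  exists m N : nat, (0 < m)%nat /\ (0 < N)%nat /\
    Rbar_lt (Rbar_plus (Phi (omega_digits n a)) (Finite eps))
            (Phi (beta_digits n a m N)) /\
    Rbar_lt (Phi (beta_digits n a m N))
            (Rbar_plus (Phi (omega_digits n a)) (Finite (2 * eps))).
Proof.
  set (w := omega_digits n a).
  assert (Hw : pos_digits w)
    by (intros i; unfold w, omega_digits; destruct (Nat.leb_spec i n); auto).
  assert (Hw1 : forall i, (n < i)%nat -> w i = 1%nat)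
    by (intros i Hi; unfold w, omega_digits; destruct (Nat.leb_spec i n); auto; lia).
  destruct (exists_tail_position_small_steps w n eps Hw Hw1 heps) as [m [Hm Hstep]].
  set (G := fun N => Phi_prefix (n + m) w (tail_cf N) (tail_Phi N)).
  assert (HPhi : forall N, (0 < N)%nat -> Phi (beta_digits n a m N) = Finite (G N))
    by (intros N HN; rewrite beta_digits_prepend by exact Hm; now apply Phi_prepend_digit_tail).
  destruct (Phi_prefix_tail_unbounded (n + m) w (G 1%nat + eps) Hw) as [N0 [HN0 HG0]].
  destruct (discrete_ivt (fun k => G (S k)) (G 1%nat + eps) eps) as [N HN].
  - lra.
  - exists (pred N0). now rewrite Nat.succ_pred_pos.
  - intros k. apply Hstep. lia.
  - exists m, (S N). split; [exact Hm|]. split; [lia|].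
    unfold w. rewrite (omega_digits_eq_beta_digits n a m Hm), !HPhi by lia. simpl. lra.
Qed.
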